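(* In the layer stripping setup (see context), with $\Theta(t):=\frac{1}{\sqrt{1+|t|^2}}\begin{pmatrix}1&-t\\\overline t&1\end{pmatrix}$ for $t\in\mathbb C$: (a) $a_{0,k}=a_{0,k-1}\sqrt{1+|\gamma_{k-1}|^2}$ for every $1\le k\le n$; in particular $a_{0,0}\le a_{0,1}\le\dots\le a_{0,n-1}$. (b) For every $0\le k\le n-1$: $\|G_k\Theta(\gamma_k)\|_2=\|G_k\|_2$ and $\|G_k\Theta(\gamma_k)\|_F=\|G_k\|_F=\|G_0\|_F=1$. (c) For every $0\le k\le n-2$: $\|G_{k+1}\|_1=\|G_k\Theta(\gamma_k)\|_1$. (d) $|a_{j,k}|\le1$ and $|b_{j,k}|\le1$ for all $0\le k\le n-1$, $0\le j\le n-k-1$. (e) $|\gamma_k|\le\Big(a_{0,0}\prod_{j=0}^{k-1}\sqrt{1+|\gamma_j|^2}\Big)^{-1}$ for every $0\le k\le n-1$.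
   Context: For a Laurent polynomial $a$, $a^*(z):=\overline{a(1/\overline z)}$. $\mathcal S$ is the set of pairs $(a,b)$ of Laurent polynomials with $aa^*+bb^*=1$ and $0<a^*(0)<\infty$; the NLFT is a bijection from compactly supported sequences $\mathbb Z\to\mathbb C$ onto $\mathcal S$, where the NLFT of $\boldsymbol\gamma$ supported in $[p,q]$ is $\prod_{k=p}^{q}\frac{1}{\sqrt{1+|\gamma_k|^2}}\begin{pmatrix}1&\gamma_k z^k\\-\overline{\gamma_k}z^{-k}&1\end{pmatrix}=\begin{pmatrix}a&b\\-b^*&a^*\end{pmatrix}$ (product ordered by increasing $k$). Layer stripping setup: let $n\ge1$ and $(a,b)\in\mathcal S$ with $b$ a polynomial of degree at most $n-1$. Set $a_0^*:=a^*$, $b_0:=b$, and for $k=0,\dots,n-1$ define recursively $\gamma_k:=b_k(0)/a_k^*(0)$, $a_{k+1}^*:=(a_k^*+\overline{\gamma_k}b_k)/\sqrt{1+|\gamma_k|^2}$, $b_{k+1}:=(b_k-\gamma_k a_k^* )/(z\sqrt{1+|\gamma_k|^2})$. (It is known that this is well defined, that $a_k^*,b_k$ are polynomials of degree at most $n-1-k$ with $a_k^*(0)>0$, that $a_n^*\equiv1$, $b_n\equiv0$, and that $(\gamma_0,\dots,\gamma_{n-1})$, extended by zero, is the unique sequence whose NLFT is $(a,b)$.) Write $a_k^*(z)=\sum_{j=0}^{n-1-k}a_{j,k}z^j$, $b_k(z)=\sum_{j=0}^{n-1-k}b_{j,k}z^j$, $\mathbf a_k:=(a_{0,k},\dots,a_{n-1-k,k})^T$,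 $\mathbf b_k:=(b_{0,k},\dots,b_{n-1-k,k})^T$ and $G_k:=(\mathbf a_k,\mathbf b_k)\in\mathbb C^{(n-k)\times2}$; conventions $a_{n-k,k}:=0$ for $0\le k\le n-1$ and $a_{0,n}:=1$. $\|\cdot\|_1,\|\cdot\|_2$ are induced matrix norms, $\|\cdot\|_F$ the Frobenius norm. *)

From HB Require Import structures.
From mathcomp Require Import all_boot all_order all_algebra.
From mathcomp Require Import complex.
From mathcomp Require Import classical_sets reals.
Set Implicit Arguments. Unset Strict Implicit. Unset Printing Implicit Defensive.
Import Order.TTheory GRing.Theory Num.Theory.
Local Open Scope ring_scope.

Section LayerStripping.
Variable R : realType.
Local Notation C := R[i].

Definition modc (z : C) : R := ComplexField.Normc.normc z.

Definition cconj (z : C) : C := conjc z.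

Definition rC (x : R) : C := (x%:C)%C.

Definition sq1 (t : C) : R := Num.sqrt (1 + modc t ^+ 2).

(* One layer-stripping step: (a_k^*, b_k) |-> (a_{k+1}^*, b_{k+1}) with
   gamma_k = b_k(0) / a_k^*(0). Division by z is polynomial division by 'X
   (exact, since b_k - gamma_k a_k^* vanishes at 0). *)
Definition ls_step (p : {poly C} * {poly C}) : {poly C} * {poly C} :=
  let: (A, B) := p in
  let g := B`_0 / A`_0 in
  let s := (rC (sq1 g))^-1 in
  (s *: (A + cconj g *: B), s *: ((B - g *: A) %/ 'X)).

Definition ls (A0 B0 : {poly C}) (k : nat) : {poly C} * {poly C} :=
  iter k ls_step (A0, B0).

Definition astar (A0 B0 : {poly C}) (k : nat) : {poly C} := (ls A0 B0 k).1.
Definition bk (A0 B0 : {poly C}) (k : nat) : {poly C} := (ls A0 B0 k).2.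

Definition gam (A0 B0 : {poly C}) (k : nat) : C :=
  (bk A0 B0 k)`_0 / (astar A0 B0 k)`_0.

Definition a0 (n : nat) (A0 B0 : {poly C}) (k : nat) : C :=
  if k == n then 1 else (astar A0 B0 k)`_0.

Definition Gmat (n : nat) (A0 B0 : {poly C}) (k : nat) : 'M[C]_(n - k, 2) :=
  \matrix_(i < n - k, j < 2)
    if j == 0 :> nat then (astar A0 B0 k)`_i else (bk A0 B0 k)`_i.

Definition Theta (t : C) : 'M[C]_2 :=
  (rC (sq1 t))^-1 *:
    \matrix_(i < 2, j < 2)
      if i == 0 :> nat then (if j == 0 :> nat then 1 else - t)
      else (if j == 0 :> nat then cconj t else 1).

Definition vnorm1 (m : nat) (x : 'cV[C]_m) : R := \sum_(i < m) modc (x i 0).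
Definition vnorm2 (m : nat) (x : 'cV[C]_m) : R :=
  Num.sqrt (\sum_(i < m) modc (x i 0) ^+ 2).

Definition mnorm1 (m p : nat) (M : 'M[C]_(m, p)) : R :=
  sup [set vnorm1 (M *m x) / vnorm1 x | x in [set x : 'cV[C]_p | x != 0]]%classic.
Definition mnorm2 (m p : nat) (M : 'M[C]_(m, p)) : R :=
  sup [set vnorm2 (M *m x) / vnorm2 x | x in [set x : 'cV[C]_p | x != 0]]%classic.

Definition frob (m p : nat) (M : 'M[C]_(m, p)) : R :=
  Num.sqrt (\sum_(i < m) \sum_(j < p) modc (M i j) ^+ 2).

End LayerStripping.

From HB Require Import structures.
From mathcomp Require Import all_boot all_order all_algebra.
From mathcomp Require Import complex.
From mathcomp Require Import classical_sets reals.
From mathcomp Require Import ring lra zify.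
Set Implicit Arguments.
Unset Strict Implicit.
Unset Printing Implicit Defensive.
Import Order.TTheory GRing.Theory Num.Theory.
Local Open Scope ring_scope.

(* For polynomials [A = a^*] and [b] of degree at most [N], the identity
   [a a^* + b b^* = 1] is the polynomial identity
   [A * crev N A + b * crev N b = 'X^N].  A stripping step replaces [(A, b)]
   by [(A + conj(g) b, b - g A) / sqrt(1 + |g|^2)], which preserves the
   identity; the choice [g = b(0) / A(0)] makes the new [b] divisible by [z],
   and the top coefficient of the identity makes the new [A] lose its degree-[N]
   term, so the identity descends to degree [N - 1].  Its coefficient of
   ['X^N] reads [sum_j |a_j|^2 + |b_j|^2 = 1], which gives the Frobenius norms,
   the coefficient bounds and hence [|gamma_k| <= 1 / a_{0,k}].  The columns of
   [G_k Theta(gamma_k)] are the coefficient vectors of [a_{k+1}^*] and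
   [z b_{k+1}], and [Theta] is unitary. *)

Section ComplexFacts.
Variable R : realType.
Local Notation C := R[i].

Lemma rC_modc (z : C) : rC (modc z) = `|z|.
Proof. by []. Qed.

Lemma modc_ge0 (z : C) : 0 <= modc z.
Proof. by case: z => a b; exact: sqrtr_ge0. Qed.

Lemma modc0 : modc (0 : C) = 0.
Proof. exact: ComplexField.Normc.normc0. Qed.

Lemma modc_eq0 (z : C) : (modc z == 0) = (z == 0).
Proof.
apply/eqP/eqP => [|->]; [exact: ComplexField.Normc.eq0_normc | exact: modc0].
Qed.

Lemma rC_sq1_sqr (t : C) : rC (sq1 t) ^+ 2 = 1 + t * t^*%C.
Proof.
rewrite /rC /sq1 -rmorphXn sqr_sqrtr ?addr_ge0 ?sqr_ge0 //.
by rewrite rmorphD rmorph1 rmorphXn /= sqr_normc.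
Qed.

Lemma rC_sq1_gt0 (t : C) : 0 < rC (sq1 t).
Proof. by rewrite ltcR sqrtr_gt0 ltr_pwDl ?sqr_ge0. Qed.

Lemma rC_sq1_ge1 (t : C) : 1 <= rC (sq1 t).
Proof.
rewrite -[1]/(rC 1) lecR -(sqrtr1 R) ler_wsqrtr //.
by rewrite lerDl sqr_ge0.
Qed.

Lemma conjc_pos (x : C) : 0 < x -> x^*%C = x.
Proof. by move=> /gtr0_real /complex_realP [y ->]; exact: conjc_real. Qed.

Lemma conjc_inv_rC_sq1 (t : C) : ((rC (sq1 t))^-1)^*%C = (rC (sq1 t))^-1.
Proof. by rewrite conjc_inv conjc_real. Qed.

Lemma inv_rC_sq1_sqr (t : C) : (rC (sq1 t))^-1 * (rC (sq1 t))^-1 * (1 + t * t^*%C) = 1.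
Proof.
have s_neq0 : rC (sq1 t) != 0 by rewrite gt_eqF // rC_sq1_gt0.
by rewrite -rC_sq1_sqr; field.
Qed.

(* Both [Theta t] acting on a row ([c = t^*]) and on a column ([c = - t])
   have this shape. *)
Lemma rotation_sqr_modc (x y c s : C) :
  s^*%C = s -> s * s * (1 + c * c^*%C) = 1 ->
  modc (s * (x + c * y)) ^+ 2 + modc (s * (y - c^*%C * x)) ^+ 2 =
  modc x ^+ 2 + modc y ^+ 2.
Proof.
move=> sJ ss; apply: complexI; rewrite !rmorphD !rmorphXn /= !sqr_normc.
rewrite !(rmorphM, rmorphD, rmorphB, rmorphN) /= sJ conjcK.
by rewrite -[RHS]mul1r -ss; ring.
Qed.

End ComplexFacts.

Lemma poly_eq_nonzero (R : numDomainType) (p q : {poly R}) :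
  (forall z, z != 0 -> p.[z] = q.[z]) -> p = q.
Proof.
move=> pq; apply/eqP; rewrite -subr_eq0; apply/eqP.
apply: (roots_geq_poly_eq0 (rs := [seq i.+1%:R | i <- iota 0 (size (p - q))])).
- by apply/allP => _ /mapP [i _ ->]; rewrite rootE !hornerE pq ?subrr ?pnatr_eq0.
- by rewrite map_inj_uniq ?iota_uniq // => i j /eqP; rewrite eqr_nat => /eqP [].
- by rewrite size_map size_iota.
Qed.

Section ConjReverse.
Variable R : rcfType.
Local Notation C := R[i].

(* [crev N p] is [z ^ N * p^*(z)] when [size p <= N.+1] (see [horner_crev]). *)
Definition crev (N : nat) (p : {poly C}) : {poly C} :=
  \poly_(i < N.+1) (p`_(N - i))^*%C.

Lemma crevD N (p q : {poly C}) : crev N (p + q) = crev N p + crev N q.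
Proof.
by apply/polyP=> i; rewrite coefD !coef_poly; case: ifP; rewrite ?addr0 // coefD rmorphD.
Qed.

Lemma crevN N (p : {poly C}) : crev N (- p) = - crev N p.
Proof.
by apply/polyP=> i; rewrite coefN !coef_poly; case: ifP; rewrite ?oppr0 // coefN rmorphN.
Qed.

Lemma crevZ N c (p : {poly C}) : crev N (c *: p) = c^*%C *: crev N p.
Proof.
by apply/polyP=> i; rewrite coefZ !coef_poly; case: ifP; rewrite ?mulr0 // coefZ rmorphM.
Qed.

Lemma crev_mulX N (p : {poly C}) : crev N.+1 (p * 'X) = crev N p.
Proof.
apply/polyP=> i; rewrite !coef_poly coefMX.
case: (ltngtP i N.+1) => [ltiN|ltNi|->]; last by rewrite ltnSn subnn conjc0.
- have -> : (N.+1 - i == 0)%N = false by apply/eqP; lia.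
  by rewrite ltnW //; congr (_^*%C); congr (p`_ _); lia.
- by rewrite !ifF //; lia.
Qed.

Lemma crev_widen M N (p : {poly C}) : (N <= M)%N -> (size p <= N.+1)%N ->
  crev M p = 'X^(M - N) * crev N p.
Proof.
move=> leNM /leq_sizeP p_hi; apply/polyP => i; rewrite coefXnM !coef_poly.
case: (ltnP i (M - N)) => hi.
  by case: ifP => // _; rewrite p_hi ?conjc0 //; lia.
have -> : (i - (M - N) < N.+1)%N = (i < M.+1)%N by apply/idP/idP; lia.
by case: ifP => // _; congr (_^*%C); congr (p`_ _); lia.
Qed.

Lemma coef_mul_crev N m (p q : {poly C}) :
  (p * crev N q)`_(N + m) = \sum_(j < N.+1) p`_(j + m) * (q`_j)^*%C.
Proof.
rewrite coefMr -(big_mkord xpredT (fun j => p`_(N + m - j) * (crev N q)`_j)).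
rewrite (big_cat_nat _ (n := N.+1)) //=; last by lia.
rewrite [X in _ + X]big1_seq ?addr0; last first.
  move=> j /andP [_]; rewrite mem_index_iota => /andP [hj _].
  by rewrite coef_poly ltnNge hj mulr0.
rewrite -(big_mkord xpredT (fun j => p`_(j + m) * (q`_j)^*%C)) big_nat_rev /=.
apply: eq_big_nat => j /andP [_ ltjN].
by rewrite coef_poly ifT; [congr (p`_ _ * (q`_ _)^*%C) | ]; lia.
Qed.

Lemma horner_crev N (p : {poly C}) z : (size p <= N.+1)%N -> z != 0 ->
  (crev N p).[z] = z ^+ N * (p.[(z^*%C)^-1])^*%C.
Proof.
move=> sp z_neq0; rewrite horner_poly (horner_coef_wide _ sp) rmorph_sum mulr_sumr.
rewrite -(big_mkord xpredT (fun i => (p`_(N - i))^*%C * z ^+ i)) big_nat_rev /=.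
rewrite -(big_mkord xpredT (fun i => z ^+ N * (p`_i * (z^*%C)^-1 ^+ i)^*%C)).
apply: eq_big_nat => i /andP [_ ltiN].
have -> : (0 + N.+1 - i.+1 = N - i)%N by lia.
have -> : (N - (N - i) = i)%N by lia.
rewrite rmorphM rmorphXn /= conjc_inv conjcK exprVn.
have -> : z ^+ N = z ^+ (N - i) * z ^+ i by rewrite -exprD subnK //; lia.
have zi_neq0 : z ^+ i != 0 by rewrite expf_neq0.
by field.
Qed.

End ConjReverse.

Section AdmissiblePairs.
Variable R : realType.
Local Notation C := R[i].

Definition admissible (N : nat) (P Q : {poly C}) :=
  [/\ (size P <= N.+1)%N, (size Q <= N.+1)%N, 0 < P`_0
    & P * crev N P + Q * crev N Q = 'X^N].

Lemma coef_mul_crev_top M d (p : {poly C}) : (size p <= d.+1)%N ->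
  (p * crev M p)`_(M + d) = p`_d * (p`_0)^*%C.
Proof.
move=> /leq_sizeP p_hi; rewrite coef_mul_crev big_ord_recl big1 ?addr0 ?add0n // => j _.
by rewrite p_hi ?mul0r // lift0 addSn ltnS leq_addl.
Qed.

Lemma admissible_sum_conj N (P Q : {poly C}) : admissible N P Q ->
  \sum_(j < N.+1) (P`_j * (P`_j)^*%C + Q`_j * (Q`_j)^*%C) = 1.
Proof.
case=> _ _ _ /(congr1 (fun r : {poly C} => r`_(N + 0))).
rewrite coefD !coef_mul_crev coefXn addn0 eqxx mulr1n -big_split => <-.
by apply: eq_bigr => j _; rewrite !addn0.
Qed.

Lemma admissible_sqr_norm N (P Q : {poly C}) : admissible N P Q ->
  \sum_(j < N.+1) (modc P`_j ^+ 2 + modc Q`_j ^+ 2) = 1.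
Proof.
move=> /admissible_sum_conj sum1; apply: complexI.
rewrite rmorph_sum rmorph1 -sum1 /=; apply: eq_bigr => j _.
by rewrite rmorphD !rmorphXn /= !sqr_normc.
Qed.

Lemma admissible_coef_le1 N (P Q : {poly C}) j : admissible N P Q ->
  modc P`_j <= 1 /\ modc Q`_j <= 1.
Proof.
move=> PQ; have [ltjN | leNj] := ltnP j N.+1; last first.
  case: PQ => /leq_sizeP P_hi /leq_sizeP Q_hi _ _.
  by rewrite P_hi ?Q_hi // modc0.
have := admissible_sqr_norm PQ; rewrite (bigD1 (Ordinal ltjN)) //= => sum1.
have le1 : modc P`_j ^+ 2 + modc Q`_j ^+ 2 <= 1.
  rewrite -sum1 lerDl; apply: sumr_ge0 => i _; exact: addr_ge0 (sqr_ge0 _) (sqr_ge0 _).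
have := sqr_ge0 (modc P`_j); have := sqr_ge0 (modc Q`_j).
by split; rewrite -(expr_le1 (n := 2)) ?modc_ge0 //; lra.
Qed.

Lemma admissible_coef_top N (P Q : {poly C}) : admissible N.+1 P Q ->
  P`_N.+1 * (P`_0)^*%C + Q`_N.+1 * (Q`_0)^*%C = 0.
Proof.
case=> sP sQ _ /(congr1 (fun r : {poly C} => r`_(N.+1 + N.+1))).
rewrite coefD !coef_mul_crev_top // coefXn => ->.
by have -> : (N.+1 + N.+1 == N.+1) = false by apply/eqP; lia.
Qed.

Lemma mul_crev_rotate N c (P Q : {poly C}) :
  let U := P + c^*%C *: Q in let V := Q - c *: P in
  U * crev N U + V * crev N V = (1 + c * c^*%C) *: (P * crev N P + Q * crev N Q).
Proof.
by rewrite /= !crevD crevN !crevZ conjcK -!mul_polyC !polyCD !polyCM polyC1; ring.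
Qed.

Lemma lsS (A B : {poly C}) k : ls A B k.+1 = ls_step (astar A B k, bk A B k).
Proof. by rewrite /astar /bk /ls iterS -surjective_pairing. Qed.

Lemma coef_ls_step1 (P Q : {poly C}) i : let g := Q`_0 / P`_0 in
  (ls_step (P, Q)).1`_i = (rC (sq1 g))^-1 * (P`_i + g^*%C * Q`_i).
Proof. by rewrite /= coefZ coefD coefZ. Qed.

Lemma ls_step2_mulX (P Q : {poly C}) : P`_0 != 0 -> let g := Q`_0 / P`_0 in
  (ls_step (P, Q)).2 * 'X = (rC (sq1 g))^-1 *: (Q - g *: P).
Proof.
move=> P0_neq0 /=; rewrite -scalerAl; congr (_ *: _); apply: divpK.
rewrite -(subr0 'X) -polyC0 dvdp_XsubCl rootE horner_coef0.
by rewrite coefB coefZ mulfVK // subrr.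
Qed.

Lemma conjc_coef0_div (P Q : {poly C}) : 0 < P`_0 ->
  (Q`_0 / P`_0)^*%C = (Q`_0)^*%C / P`_0.
Proof. by move=> P0_gt0; rewrite fmorph_div /= (conjc_pos P0_gt0). Qed.

Lemma coef0_ls_step1 (P Q : {poly C}) : 0 < P`_0 ->
  (ls_step (P, Q)).1`_0 = P`_0 * rC (sq1 (Q`_0 / P`_0)).
Proof.
move=> P0_gt0; rewrite coef_ls_step1.
have := rC_sq1_sqr (Q`_0 / P`_0); rewrite conjc_coef0_div //.
have := rC_sq1_gt0 (Q`_0 / P`_0); set r := rC _ => r_gt0 r2.
have r_neq0 : r != 0 by rewrite gt_eqF.
have P0_neq0 : P`_0 != 0 by rewrite gt_eqF.
have -> : P`_0 + (Q`_0)^*%C / P`_0 * Q`_0 = P`_0 * r ^+ 2 by rewrite r2; field.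
by field.
Qed.

Lemma size_ls_step N (P Q : {poly C}) : admissible N.+1 P Q ->
  (size (ls_step (P, Q)).1 <= N.+1)%N /\ (size (ls_step (P, Q)).2 <= N.+1)%N.
Proof.
move=> PQ; have top := admissible_coef_top PQ.
case: PQ => /leq_sizeP P_hi /leq_sizeP Q_hi P0_gt0 _.
have P0_neq0 : P`_0 != 0 by rewrite gt_eqF.
split.
  apply: leq_trans (size_scale_leq _ _) _; apply/leq_sizeP => j.
  rewrite leq_eqVlt coefD coefZ => /orP [/eqP <- | ltNj]; last first.
    by rewrite (P_hi j) ?(Q_hi j) // mulr0 addr0.
  rewrite /cconj conjc_coef0_div //.
  have -> : P`_N.+1 + (Q`_0)^*%C / P`_0 * Q`_N.+1 =
      (P`_N.+1 * (P`_0)^*%C + Q`_N.+1 * (Q`_0)^*%C) / P`_0.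
    by rewrite (conjc_pos P0_gt0); field.
  by rewrite top mul0r.
apply/leq_sizeP => j ltNj; have := coefMX (ls_step (P, Q)).2 j.+1.
rewrite ls_step2_mulX // coefZ coefB coefZ (P_hi j.+1) ?(Q_hi j.+1) //.
by rewrite mulr0 subr0 mulr0 => /esym.
Qed.

Lemma admissible_ls_step N (P Q : {poly C}) : admissible N.+1 P Q ->
  admissible N (ls_step (P, Q)).1 (ls_step (P, Q)).2.
Proof.
move=> PQ; have [size_P' size_W] := size_ls_step PQ.
case: PQ => _ _ P0_gt0 PQ; have P0_neq0 : P`_0 != 0 by rewrite gt_eqF.
split=> //; first by rewrite coef0_ls_step1 // mulr_gt0 ?rC_sq1_gt0.
set g := Q`_0 / P`_0; set s := (rC (sq1 g))^-1.
set P' := (ls_step (P, Q)).1; set W := (ls_step (P, Q)).2 in size_W *.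
have P'E : P' = s *: (P + g^*%C *: Q) by [].
have WX : W * 'X = s *: (Q - g *: P) by apply: ls_step2_mulX.
have sJ : s^*%C = s by apply: conjc_inv_rC_sq1.
apply: (@mulfI _ 'X); first by rewrite polyX_eq0.
rewrite -exprS mulrDr.
have -> : 'X * (P' * crev N P') = P' * crev N.+1 P'.
  by rewrite (crev_widen (leqnSn N)) // subSnn expr1 mulrCA.
rewrite -(crev_mulX N W) mulrCA mulrA WX P'E !crevZ sJ.
rewrite -!scalerAl -!scalerAr !scalerA -scalerDr mul_crev_rotate PQ scalerA.
by rewrite inv_rC_sq1_sqr scale1r.
Qed.

Lemma admissible0_coef0_sq1 (P Q : {poly C}) : admissible 0 P Q ->
  P`_0 * rC (sq1 (Q`_0 / P`_0)) = 1.
Proof.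
move=> PQ; have := admissible_sum_conj PQ; rewrite big_ord1.
case: PQ => _ _ P0_gt0 _ sum1; have P0_neq0 : P`_0 != 0 by rewrite gt_eqF.
apply/eqP; rewrite -sqrp_eq1 ?mulr_ge0 ?ltW ?rC_sq1_gt0 //.
rewrite exprMn rC_sq1_sqr conjc_coef0_div // -{2}sum1 (conjc_pos P0_gt0).
by apply/eqP; field.
Qed.

Lemma admissible_of_unit_modulus n (A b : {poly C}) :
  (1 <= n)%N -> (size b <= n)%N -> 0 < A`_0 ->
  (forall z, z != 0 ->
     cconj A.[(cconj z)^-1] * A.[z] + b.[z] * cconj b.[(cconj z)^-1] = 1) ->
  admissible n.-1 A b.
Proof.
case: n => [//|N] _ /= size_b A0_gt0 unit_modulus.
have [M [size_AM le_NM]] : exists M, (size A <= M.+1)%N /\ (N.+1 <= M)%N.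
  by exists (size A + N.+1)%N; split; lia.
have size_bM : (size b <= M.+1)%N by apply: leq_trans size_b _; lia.
have AbM : A * crev M A + b * crev M b = 'X^M.
  apply: poly_eq_nonzero => z z_neq0.
  rewrite hornerD !hornerM !horner_crev ?hornerXn //.
  by rewrite -[RHS]mulr1 -(unit_modulus z z_neq0) /cconj; ring.
have size_A : (size A <= N.+1)%N.
  rewrite leqNgt; apply/negP => lt_N_A.
  have [d size_A_eq] : exists d, size A = d.+1 by exists (size A).-1; rewrite prednK //; lia.
  have := congr1 (fun r : {poly C} => r`_(M + d)) AbM.
  rewrite /= coefD coefXn !coef_mul_crev_top ?size_A_eq //; last by apply: leq_trans size_b _; lia.
  have -> : (M + d == M) = false by apply/eqP; lia.
  have /leq_sizeP b_hi : (size b <= d)%N by apply: leq_trans size_b _; lia.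
  rewrite b_hi // mul0r addr0 (conjc_pos A0_gt0) => /eqP.
  rewrite mulf_eq0 (gt_eqF A0_gt0) orbF -[d]/(d.+1.-1) -size_A_eq -lead_coefE.
  by rewrite lead_coef_eq0 => /eqP A0; rewrite A0 coef0 ltxx in A0_gt0.
split=> //.
have [widen_A widen_b] : crev M A = 'X^(M - N) * crev N A /\ crev M b = 'X^(M - N) * crev N b.
  by split; apply: crev_widen => //; lia.
have Xn0 : ('X^(M - N) : {poly C}) != 0 by rewrite expf_neq0 // polyX_eq0.
apply: (mulfI Xn0); rewrite -exprD subnK; last by lia.
by rewrite -AbM widen_A widen_b; ring.
Qed.

End AdmissiblePairs.

Lemma sum_ord2 (V : nmodType) (F : 'I_2 -> V) :
  \sum_(i < 2) F i = F ord0 + F ord_max.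
Proof. by rewrite !big_ord_recl big_ord0 addr0; congr (_ + F _); apply: val_inj. Qed.

Section Rotation.
Variable R : realType.
Local Notation C := R[i].
Implicit Types (t : C) (m : nat).

Lemma ord2P (i : 'I_2) : i = ord0 \/ i = ord_max.
Proof. by case: i => [[|[|//]] ?]; [left | right]; apply: val_inj. Qed.

Lemma mulmx_Theta0 m (M : 'M[C]_(m, 2)) t i :
  (M *m Theta t) i ord0 = (rC (sq1 t))^-1 * (M i ord0 + t^*%C * M i ord_max).
Proof. by rewrite mxE sum_ord2 !mxE /= /cconj; ring. Qed.

Lemma mulmx_Theta1 m (M : 'M[C]_(m, 2)) t i :
  (M *m Theta t) i ord_max = (rC (sq1 t))^-1 * (M i ord_max - t * M i ord0).
Proof. by rewrite mxE sum_ord2 !mxE /=; ring. Qed.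

Lemma frob_mulmx_Theta m (M : 'M[C]_(m, 2)) t : frob (M *m Theta t) = frob M.
Proof.
rewrite /frob; congr Num.sqrt; apply: eq_bigr => i _.
rewrite !sum_ord2 mulmx_Theta0 mulmx_Theta1 -[t in t * M i ord0]conjcK.
by rewrite rotation_sqr_modc ?conjc_inv_rC_sq1 // conjcK [t^*%C * t]mulrC inv_rC_sq1_sqr.
Qed.

Lemma Theta_mulmx0 t (v : 'cV[C]_2) :
  (Theta t *m v) ord0 0 = (rC (sq1 t))^-1 * (v ord0 0 + (- t) * v ord_max 0).
Proof. by rewrite mxE sum_ord2 !mxE /=; ring. Qed.

Lemma Theta_mulmx1 t (v : 'cV[C]_2) :
  (Theta t *m v) ord_max 0 = (rC (sq1 t))^-1 * (v ord_max 0 - (- t)^*%C * v ord0 0).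
Proof. by rewrite mxE sum_ord2 !mxE /= rmorphN /cconj; ring. Qed.

Lemma vnorm2_Theta t (v : 'cV[C]_2) : vnorm2 (Theta t *m v) = vnorm2 v.
Proof.
rewrite /vnorm2 !sum_ord2 Theta_mulmx0 Theta_mulmx1 rotation_sqr_modc //.
  exact: conjc_inv_rC_sq1.
by rewrite rmorphN /= mulrNN inv_rC_sq1_sqr.
Qed.

End Rotation.

Lemma sup_eq_ub (R : realType) (E : set R) x : E x -> ubound E x -> sup E = x.
Proof.
move=> Ex ubx; apply/le_anti/andP; split; first by apply: ge_sup => //; exists x.
by apply: ub_le_sup => //; exists x.
Qed.

Section MatrixNorms.
Variable R : realType.
Local Notation C := R[i].

Lemma mnorm2_mulmx_unitary m p (M : 'M[C]_(m, p)) (U V : 'M[C]_p) :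
  (forall v, vnorm2 (U *m v) = vnorm2 v) -> U *m V = 1%:M -> V *m U = 1%:M ->
  mnorm2 (M *m U) = mnorm2 M.
Proof.
move=> normU UV VU; rewrite /mnorm2; congr sup; apply/seteqP; split=> _ [x x_neq0 <-].
- exists (U *m x); last by rewrite mulmxA normU.
  by apply: contra x_neq0 => /eqP Ux0; rewrite -[x]mul1mx -VU -mulmxA Ux0 mulmx0.
- exists (V *m x); last first.
    by rewrite -mulmxA (mulmxA U) UV mul1mx -normU mulmxA UV mul1mx.
  by apply: contra x_neq0 => /eqP Vx0; rewrite -[x]mul1mx -UV -mulmxA Vx0 mulmx0.
Qed.

Lemma Theta_mulN (t : C) : Theta t *m Theta (- t) = 1%:M.
Proof.
have sq1N : sq1 (- t) = sq1 t by rewrite /sq1 /modc normcN.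
have ss := inv_rC_sq1_sqr t; set s := (rC (sq1 t))^-1 in ss.
apply/matrixP => i j; rewrite !mxE sum_ord2 !mxE sq1N -/s /= /cconj rmorphN.
case: (ord2P i) (ord2P j) => -> [] ->; rewrite /= ?mulr0n ?mulr1n;
  by [ring | rewrite -[RHS]ss; ring].
Qed.

Lemma mnorm2_mulmx_Theta m (M : 'M[C]_(m, 2)) t : mnorm2 (M *m Theta t) = mnorm2 M.
Proof.
apply: mnorm2_mulmx_unitary (Theta (- t)) (vnorm2_Theta t) (Theta_mulN t) _.
by rewrite -{2}[t]opprK Theta_mulN.
Qed.

Lemma vnorm1_gt0 p (x : 'cV[C]_p) : x != 0 -> 0 < vnorm1 x.
Proof.
move=> x_neq0; rewrite lt_def sumr_ge0 ?andbT => [|i _]; last exact: modc_ge0.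
apply: contra x_neq0 => /eqP /psumr_eq0P sum0; apply/eqP/matrixP => i j.
by rewrite (ord1 j) mxE; apply/eqP; rewrite -modc_eq0 sum0 // => k _; exact: modc_ge0.
Qed.

Lemma vnorm1_delta p (j : 'I_p) : vnorm1 (delta_mx j 0 : 'cV[C]_p) = 1.
Proof.
rewrite /vnorm1 (bigD1 j) //= big1 => [|i /negbTE ij]; rewrite !mxE ?ij ?eqxx /= /modc.
  by rewrite expr1n expr0n !addr0 sqrtr1.
by rewrite expr0n addr0 sqrtr0.
Qed.

Lemma mnorm1_col2 m (M : 'M[C]_(m, 2)) :
  mnorm1 M = Num.max (\sum_(i < m) modc (M i ord0)) (\sum_(i < m) modc (M i ord_max)).
Proof.
set c0 := \sum_(i < m) _; set c1 := \sum_(i < m) _.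
apply: sup_eq_ub => [|_ [x x_neq0 <-]].
  suff col_in j : exists2 x : 'cV[C]_2, x != 0 &
      vnorm1 (M *m x) / vnorm1 x = \sum_(i < m) modc (M i j).
    by rewrite /Order.max; case: ifP => _; apply: col_in.
  exists (delta_mx j 0).
    by apply/eqP => /matrixP /(_ j 0); rewrite !mxE !eqxx => /eqP; rewrite oner_eq0.
  by rewrite -colE vnorm1_delta divr1; apply: eq_bigr => i _; rewrite mxE.
rewrite /= ler_pdivrMr ?vnorm1_gt0 // {2}/vnorm1 sum_ord2.
apply: (@le_trans _ _ (c0 * modc (x ord0 0) + c1 * modc (x ord_max 0))).
  rewrite !mulr_suml -big_split; apply: ler_sum => i _; rewrite mxE sum_ord2.
  rewrite -!ComplexField.Normc.normcM; exact: le_normcD.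
by rewrite mulrDr lerD // ler_wpM2r ?modc_ge0 // le_max lexx ?orbT.
Qed.

End MatrixNorms.

Section LayerStripping.
Variable R : realType.
Local Notation C := R[i].

Lemma sum_modc_coef_widen N (p : {poly C}) : (size p <= N)%N ->
  \sum_(i < N.+1) modc p`_i = \sum_(i < N) modc p`_i.
Proof.
by move=> /leq_sizeP p_hi; rewrite big_ord_recr /= p_hi // modc0 addr0.
Qed.

Lemma sum_modc_coefMX N (p : {poly C}) :
  \sum_(i < N.+1) modc (p * 'X)`_i = \sum_(i < N) modc p`_i.
Proof.
rewrite big_ord_recl coefMX eqxx modc0 add0r; apply: eq_bigr => i _.
by rewrite lift0 coefMX.
Qed.

Variables (n : nat) (A b : {poly C}).
Hypothesis Ab : admissible n.-1 A b.

Lemma admissible_layer k : (k < n)%N ->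
  admissible (n.-1 - k) (astar A b k) (bk A b k).
Proof.
elim: k => [|k IHk] lt_kn; first by rewrite subn0.
have := IHk (ltnW lt_kn); have -> : (n.-1 - k = (n.-1 - k.+1).+1)%N by lia.
by move/admissible_ls_step; rewrite /astar /bk lsS.
Qed.

Lemma a0E k : (k < n)%N -> a0 n A b k = (astar A b k)`_0.
Proof. by move=> lt_kn; rewrite /a0 ifF //; apply/eqP; lia. Qed.

Lemma a0_gt0 k : (k < n)%N -> 0 < a0 n A b k.
Proof. by move=> lt_kn; rewrite a0E //; case: (admissible_layer lt_kn). Qed.

Lemma a0_succ k : (k < n)%N -> a0 n A b k.+1 = a0 n A b k * rC (sq1 (gam A b k)).
Proof.
move=> lt_kn; have layer_k := admissible_layer lt_kn.
have [lt_k1n | eq_k1n] := ltnP k.+1 n.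
  by rewrite !a0E // {1}/astar lsS coef0_ls_step1 //; case: layer_k.
have k1n : k.+1 = n by lia.
rewrite /a0 k1n eqxx ifF; last by apply/eqP; lia.
by rewrite /gam admissible0_coef0_sq1 //; move: layer_k; rewrite -k1n /= subnn.
Qed.

Lemma a0_prod k : (k < n)%N ->
  a0 n A b k = a0 n A b 0 * \prod_(j < k) rC (sq1 (gam A b j)).
Proof.
elim: k => [|k IHk] lt_kn; first by rewrite big_ord0 mulr1.
by rewrite a0_succ ?IHk ?(ltnW lt_kn) // big_ord_recr mulrA.
Qed.

Lemma gam_norm_le k : (k < n)%N -> rC (modc (gam A b k)) <= (a0 n A b k)^-1.
Proof.
move=> lt_kn; have [_ b_le1] := admissible_coef_le1 0 (admissible_layer lt_kn).
have a0_pos := a0_gt0 lt_kn; rewrite a0E // in a0_pos *.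
rewrite rC_modc /gam normf_div (gtr0_norm a0_pos) -[X in _ <= X]mul1r.
rewrite ler_wpM2r ?invr_ge0 ?(ltW a0_pos) //.
by rewrite -rC_modc /rC -(rmorph1 (real_complex R)) lecR.
Qed.

Lemma frob_Gmat k : (k < n)%N -> frob (Gmat n A b k) = 1.
Proof.
move=> lt_kn; rewrite /frob -(sqrtr1 R); congr Num.sqrt.
rewrite -(admissible_sqr_norm (admissible_layer lt_kn)).
under eq_bigr => i _ do rewrite sum_ord2 !mxE /=.
by have -> : (n - k = (n.-1 - k).+1)%N by lia.
Qed.

Lemma mnorm1_Gmat_succ k : (k.+2 <= n)%N ->
  mnorm1 (Gmat n A b k.+1) = mnorm1 (Gmat n A b k *m Theta (gam A b k)).
Proof.
move=> lt_k1n; have [_ _ a0_pos _] := admissible_layer (ltnW lt_k1n).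
have [size_a1 _ _ _] := admissible_layer lt_k1n.
have bX i : (bk A b k.+1 * 'X)`_i =
    (rC (sq1 (gam A b k)))^-1 * ((bk A b k)`_i - gam A b k * (astar A b k)`_i).
  by rewrite {1}/bk lsS ls_step2_mulX ?gt_eqF // coefZ coefB coefZ.
rewrite !mnorm1_col2; congr Num.max; under eq_bigr => i _ do rewrite mxE /=.
- under [RHS]eq_bigr => i _ do rewrite mulmx_Theta0 !mxE -coef_ls_step1 -lsS.
  have -> : (n - k = (n - k.+1).+1)%N by lia.
  by rewrite sum_modc_coef_widen //; apply: leq_trans size_a1 _; lia.
- under [RHS]eq_bigr => i _ do rewrite mulmx_Theta1 !mxE -bX.
  have -> : (n - k = (n - k.+1).+1)%N by lia.
  by rewrite sum_modc_coefMX.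
Qed.

End LayerStripping.

Theorem lemma4p1 (R : realType) (n : nat) (A b : {poly R[i]}) :
  (1 <= n)%N ->
  (* b is a polynomial of degree at most n-1 *)
  (size b <= n)%N ->
  (* A = a^* is a polynomial (a^*(0) < oo) with 0 < a^*(0) *)
  0 < A`_0 ->
  (* a a^* + b b^* = 1 as Laurent polynomials, i.e. on all z <> 0 *)
  (forall z : R[i], z != 0 ->
     cconj A.[(cconj z)^-1] * A.[z] + b.[z] * cconj b.[(cconj z)^-1] = 1) ->
  [/\
  (* (a) *)
    (forall k : nat, (1 <= k <= n)%N ->
       a0 n A b k = a0 n A b k.-1 * rC (sq1 (gam A b k.-1)))
    /\ (forall k : nat, (k.+1 <= n.-1)%N -> a0 n A b k <= a0 n A b k.+1),
  (* (b) *)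
    (forall k : nat, (k < n)%N ->
       [/\ mnorm2 (Gmat n A b k *m Theta (gam A b k)) = mnorm2 (Gmat n A b k),
           frob (Gmat n A b k *m Theta (gam A b k)) = frob (Gmat n A b k),
           frob (Gmat n A b k) = frob (Gmat n A b 0)
         & frob (Gmat n A b 0) = 1]),
  (* (c) *)
    (forall k : nat, (k.+2 <= n)%N ->
       mnorm1 (Gmat n A b k.+1) = mnorm1 (Gmat n A b k *m Theta (gam A b k))),
  (* (d) *)
    (forall k j : nat, (k < n)%N -> (j <= n - k - 1)%N ->
       modc (astar A b k)`_j <= 1 /\ modc (bk A b k)`_j <= 1)
  & (* (e) *)
    (forall k : nat, (k < n)%N ->
       rC (modc (gam A b k))
         <= (a0 n A b 0 * \prod_(j < k) rC (sq1 (gam A b j)))^-1)].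
Proof.
move=> n_gt0 size_b A0_gt0 unit_modulus.
have Ab := admissible_of_unit_modulus n_gt0 size_b A0_gt0 unit_modulus.
split.
- split=> [[|k] // /andP [_ lt_kn] | k lt_k1n]; first exact: a0_succ.
  rewrite (a0_succ Ab); last by lia.
  by rewrite ler_peMr ?rC_sq1_ge1 // ltW // (a0_gt0 Ab); lia.
- by move=> k lt_kn; rewrite mnorm2_mulmx_Theta frob_mulmx_Theta !(frob_Gmat Ab).
- exact: mnorm1_Gmat_succ.
- by move=> k j lt_kn _; apply: admissible_coef_le1 (admissible_layer Ab lt_kn).
- by move=> k lt_kn; rewrite -(a0_prod Ab) //; apply: gam_norm_le.
Qed.
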